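(* Let $1\le p\le2$, $A\in\mathbb{R}^{m\times n}$, let $\bar{x}\in\mathbb{R}^n$ have exactly $S\ge1$ nonzero groups, $b:=A\bar{x}$, and suppose the $(p,1/2)$-GREC$(S,S)$ holds. Let $\lambda>0$ and let $x^*$ be a global minimizer of $\|Ax-b\|_2^2+\lambda\|x\|_{p,1/2}^{1/2}$. Then $\|x^*-\bar{x}\|_2^2\le 2\lambda^{4/3}S/\phi_{p,1/2}^{8/3}(S,S)$; in particular $\|x^*-\bar{x}\|_2^2=O(\lambda^{4/3}S)$.
   Context: Group structure: $\{1,\dots,n\}$ is partitioned into disjoint nonempty index sets $\mathcal{G}_1,\dots,\mathcal{G}_r$; $x_{\mathcal{G}_i}$ is the subvector indexed by $\mathcal{G}_i$. For $\mathcal{J}\subseteq\{1,\dots,r\}$, $\|x_{\mathcal{G}_{\mathcal{J}}}\|_{p,q}:=(\sum_{i\in\mathcal{J}}\|x_{\mathcal{G}_i}\|_p^q)^{1/q}$ and $\|x\|_{p,q}:=\|x_{\mathcal{G}_{\{1,\dots,r\}}}\|_{p,q}$. For $\mathcal{J}\subseteq\{1,\dots,r\}$ and integer $N$, $\mathcal{J}(x;N)$ is the set of the $N$ indices $i\in\mathcal{J}^c$ with the largest $\|x_{\mathcal{G}_i}\|_p$ (ties broken arbitrarily). $\phi_{p,q}(S,N):=\inf\{\|Ax\|_2/\|x_{\mathcal{G}_{\mathcal{N}}}\|_{p,2}: x\ne0,\ |\mathcal{J}|\le S,\ \|x_{\mathcal{G}_{\mathcal{J}^c}}\|_{p,q}\le\|x_{\mathcal{G}_{\mathcal{J}}}\|_{p,q},\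 \mathcal{N}=\mathcal{J}(x;N)\cup\mathcal{J}\}$; the $(p,q)$-GREC$(S,N)$ holds if $\phi_{p,q}(S,N)>0$. *)

From Stdlib Require Import Reals List Arith.
Import ListNotations.
Open Scope R_scope.

(* x^y for x >= 0, y > 0, with the convention 0^y = 0 (Stdlib's Rpower 0 y = 1). *)
Definition rpow (x y : R) : R := if Rlt_dec 0 x then Rpower x y else 0.

Definition rsum (l : list nat) (f : nat -> R) : R :=
  fold_right (fun i acc => f i + acc) 0 l.

(* Group structure: coordinate j (< n) belongs to group G_(g j), groups indexed 0..r-1.
   This encodes a partition of {0..n-1} into r disjoint nonempty sets. *)
Definition is_group_partition (n r : nat) (g : nat -> nat) : Prop :=
  (forall j, (j < n)%nat -> (g j < r)%nat) /\
  (forall i, (i < r)%nat -> exists j, (j < n)%nat /\ g j = i).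

Definition gnorm (p : R) (n : nat) (g : nat -> nat) (x : nat -> R) (i : nat) : R :=
  rpow (rsum (filter (fun j => Nat.eqb (g j) i) (seq 0 n))
             (fun j => rpow (Rabs (x j)) p)) (/ p).

Definition gpq (p q : R) (n : nat) (g : nat -> nat) (x : nat -> R) (J : list nat) : R :=
  rpow (rsum J (fun i => rpow (gnorm p n g x i) q)) (/ q).

Definition gpq_full (p q : R) (n r : nat) (g : nat -> nat) (x : nat -> R) : R :=
  gpq p q n g x (seq 0 r).

Definition compl (r : nat) (J : list nat) : list nat :=
  filter (fun i => negb (existsb (Nat.eqb i) J)) (seq 0 r).

Definition is_topN (p : R) (n r : nat) (g : nat -> nat) (x : nat -> R)
    (J : list nat) (N : nat) (T : list nat) : Prop :=
  NoDup T /\ incl T (compl r J) /\ length T = Nat.min N (length (compl r J)) /\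
  (forall i k, In i T -> In k (compl r J) -> ~ In k T ->
     gnorm p n g x k <= gnorm p n g x i).

Definition matvec (n : nat) (A : nat -> nat -> R) (x : nat -> R) : nat -> R :=
  fun i => rsum (seq 0 n) (fun j => A i j * x j).

Definition norm2sq (k : nat) (y : nat -> R) : R := rsum (seq 0 k) (fun i => y i ^ 2).
Definition norm2 (k : nat) (y : nat -> R) : R := sqrt (norm2sq k y).

Definition grec_vals (p q : R) (m n r : nat) (g : nat -> nat) (A : nat -> nat -> R)
    (S N : nat) (v : R) : Prop :=
  exists (x : nat -> R) (J T : list nat),
    (exists j, (j < n)%nat /\ x j <> 0) /\
    NoDup J /\ (forall i, In i J -> (i < r)%nat) /\ (length J <= S)%nat /\
    gpq p q n g x (compl r J) <= gpq p q n g x J /\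
    is_topN p n r g x J N T /\
    v = norm2 m (matvec n A x) / gpq p 2 n g x (J ++ T).

Definition is_glb (E : R -> Prop) (l : R) : Prop :=
  (forall v, E v -> l <= v) /\ (forall l', (forall v, E v -> l' <= v) -> l' <= l).

Definition is_phi (p q : R) (m n r : nat) (g : nat -> nat) (A : nat -> nat -> R)
    (S N : nat) (phi : R) : Prop :=
  is_glb (grec_vals p q m n r g A S N) phi.

Definition num_nonzero_groups (p : R) (n r : nat) (g : nat -> nat) (x : nat -> R) : nat :=
  length (filter (fun i => if Req_EM_T (gnorm p n g x i) 0 then false else true) (seq 0 r)).

Definition vsub (x y : nat -> R) : nat -> R := fun j => x j - y j.

(* Put h := xstar - xbar and let J be the S groups where xbar does not vanish.  Testing the
   optimality of xstar against xbar and using the triangle inequality for group norms on J gives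
   |Ah|^2 + lambda U <= lambda V, where U and V sum |h_Gi|_p^(1/2) over J^c and over J.  So h lies
   in the GREC cone, and with T the S largest groups of h off J,
   phi^2 W <= |Ah|^2 <= lambda V for W := sum over J u T of |h_Gi|_p^2.  Hoelder gives
   V^4 <= S^3 W, whence W <= lambda^(4/3) S / phi^(8/3).  Each group outside J u T has
   |h_Gi|_p^(1/2) <= V / S, so together they contribute at most V^4 / S^3 <= W, and
   |h|_2^2 <= sum_i |h_Gi|_p^2 because p <= 2. *)

From Stdlib Require Import Reals List Arith Lra Lia Psatz Permutation Sorted Classical.
Import ListNotations.
Open Scope R_scope.

(** * Real powers *)

Lemma rpow_Rpower x y : 0 < x -> rpow x y = Rpower x y.
Proof. intro Hx. unfold rpow. destruct (Rlt_dec 0 x); [reflexivity | lra]. Qed.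

Lemma rpow_nonpos x y : x <= 0 -> rpow x y = 0.
Proof. intro Hx. unfold rpow. destruct (Rlt_dec 0 x); [lra | reflexivity]. Qed.

Lemma rpow_gt0 x y : 0 < x -> 0 < rpow x y.
Proof. intro Hx. rewrite rpow_Rpower by exact Hx. apply exp_pos. Qed.

Lemma rpow_ge0 x y : 0 <= rpow x y.
Proof.
  destruct (Rlt_dec 0 x) as [Hx|Hx].
  - left; apply rpow_gt0, Hx.
  - rewrite rpow_nonpos by lra. lra.
Qed.

Lemma rpow_eq0 x y : 0 <= x -> rpow x y = 0 -> x = 0.
Proof.
  intros Hx E. destruct (Req_dec x 0) as [|Hx0]; [assumption|].
  pose proof (rpow_gt0 x y). lra.
Qed.

Lemma rpow_pow x k : 0 <= x -> (1 <= k)%nat -> rpow x (INR k) = x ^ k.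
Proof.
  intros Hx Hk. destruct (Req_dec x 0) as [->|Hx0].
  - rewrite rpow_nonpos by lra. destruct k; [lia|]. simpl; ring.
  - rewrite rpow_Rpower by lra. apply Rpower_pow; lra.
Qed.

Lemma rpow_2 x : 0 <= x -> rpow x 2 = x ^ 2.
Proof. intro Hx. replace 2 with (INR 2) by (simpl; ring). apply rpow_pow; [exact Hx | lia]. Qed.

Lemma rpow_1 x : 0 <= x -> rpow x 1 = x.
Proof. intro Hx. replace 1 with (INR 1) by reflexivity. rewrite rpow_pow by (auto; lia). ring. Qed.

Lemma rpow_sqrt x : 0 <= x -> rpow x (/ 2) = sqrt x.
Proof.
  intro Hx. destruct (Req_dec x 0) as [->|Hx0].
  - rewrite rpow_nonpos, sqrt_0 by lra. reflexivity.
  - rewrite rpow_Rpower by lra. apply Rpower_sqrt; lra.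
Qed.

Lemma rpow_mult x y z : 0 <= x -> rpow (rpow x y) z = rpow x (y * z).
Proof.
  intro Hx. destruct (Req_dec x 0) as [->|Hx0].
  - rewrite (rpow_nonpos 0 y), !rpow_nonpos by lra. reflexivity.
  - rewrite (rpow_Rpower x y), !rpow_Rpower by (try apply exp_pos; lra). apply Rpower_mult.
Qed.

Lemma rpow_plus x y z : 0 <= x -> rpow x (y + z) = rpow x y * rpow x z.
Proof.
  intro Hx. destruct (Req_dec x 0) as [->|Hx0].
  - rewrite !rpow_nonpos by lra. ring.
  - rewrite !rpow_Rpower by lra. apply Rpower_plus.
Qed.

Lemma rpow_mult_distr x z y : 0 <= x -> 0 <= z -> rpow (x * z) y = rpow x y * rpow z y.
Proof.
  intros Hx Hz. destruct (Req_dec x 0) as [->|Hx0].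
  { rewrite Rmult_0_l, !(rpow_nonpos 0) by lra. ring. }
  destruct (Req_dec z 0) as [->|Hz0].
  { rewrite Rmult_0_r, !(rpow_nonpos 0) by lra. ring. }
  rewrite !rpow_Rpower by nra. symmetry. apply Rpower_mult_distr; lra.
Qed.

Lemma rpow_div x z y : 0 <= x -> 0 < z -> rpow (x / z) y = rpow x y / rpow z y.
Proof.
  intros Hx Hz. unfold Rdiv.
  rewrite rpow_mult_distr by (try apply Rlt_le, Rinv_0_lt_compat; lra). f_equal.
  rewrite !rpow_Rpower by (try apply Rinv_0_lt_compat; lra).
  unfold Rpower. rewrite ln_Rinv, <- exp_Ropp by lra. f_equal. ring.
Qed.

Lemma rpow_le x z y : 0 <= y -> 0 <= x <= z -> rpow x y <= rpow z y.
Proof.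
  intros Hy Hxz. destruct (Req_dec x 0) as [->|Hx0].
  - rewrite rpow_nonpos by lra. apply rpow_ge0.
  - rewrite !rpow_Rpower by lra. apply Rle_Rpower_l; lra.
Qed.

Lemma rpow_le_reg a b p : 0 < p -> 0 <= a -> 0 <= b -> rpow a p <= rpow b p -> a <= b.
Proof.
  intros Hp Ha Hb H.
  assert (H' : rpow (rpow a p) (/ p) <= rpow (rpow b p) (/ p)).
  { apply rpow_le; [apply Rlt_le, Rinv_0_lt_compat; lra | split; [apply rpow_ge0 | exact H]]. }
  rewrite !rpow_mult, Rinv_r, !rpow_1 in H' by lra. exact H'.
Qed.

Lemma Rpower_pow_mult x y k : 0 < x -> Rpower x y ^ k = Rpower x (y * INR k).
Proof. intro Hx. rewrite <- Rpower_pow by apply exp_pos. apply Rpower_mult. Qed.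

Lemma sqrt_plus_le a b : 0 <= a -> 0 <= b -> sqrt (a + b) <= sqrt a + sqrt b.
Proof.
  intros Ha Hb. pose proof (sqrt_pos a). pose proof (sqrt_pos b).
  rewrite <- (sqrt_pow2 (sqrt a + sqrt b)) by lra. apply sqrt_le_1_alt.
  pose proof (sqrt_sqrt a Ha). pose proof (sqrt_sqrt b Hb). nra.
Qed.

Lemma Rpower_tangent_le c u p : 0 < c -> 0 < u -> 1 <= p ->
  Rpower c p + p * Rpower c (p - 1) * (u - c) <= Rpower u p.
Proof.
  intros Hc Hu Hp.
  assert (Hder : forall x, 0 < x ->
    derivable_pt_lim (fun x => Rpower x p) x (p * Rpower x (p - 1)))
    by (intros; apply derivable_pt_lim_power; lra).
  destruct (Rtotal_order c u) as [Hlt|[<-|Hgt]].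
  - destruct (MVT_cor2 _ _ c u Hlt (fun x Hx => Hder x ltac:(lra))) as [xi [Exi Hxi]].
    assert (Rpower c (p - 1) <= Rpower xi (p - 1)) by (apply Rle_Rpower_l; lra).
    assert (p * Rpower c (p - 1) * (u - c) <= p * Rpower xi (p - 1) * (u - c))
      by (apply Rmult_le_compat_r; [lra|]; apply Rmult_le_compat_l; lra).
    cbv beta in Exi. lra.
  - lra.
  - destruct (MVT_cor2 _ _ u c Hgt (fun x Hx => Hder x ltac:(lra))) as [xi [Exi Hxi]].
    assert (Rpower xi (p - 1) <= Rpower c (p - 1)) by (apply Rle_Rpower_l; lra).
    assert (p * Rpower xi (p - 1) * (c - u) <= p * Rpower c (p - 1) * (c - u))
      by (apply Rmult_le_compat_r; [lra|]; apply Rmult_le_compat_l; lra).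
    cbv beta in Exi. lra.
Qed.

Lemma rpow_tangent_le c u p : 0 < c -> 0 <= u -> 1 <= p ->
  Rpower c p + p * Rpower c (p - 1) * (u - c) <= rpow u p.
Proof.
  intros Hc Hu Hp. destruct (Req_dec u 0) as [->|Hu0].
  - assert (E : Rpower c (p - 1) * c = Rpower c p).
    { rewrite <- (Rpower_1 c) at 2 by lra. rewrite <- Rpower_plus. f_equal; ring. }
    rewrite rpow_nonpos by lra. pose proof (exp_pos (p * ln c)). unfold Rpower in *. nra.
  - rewrite rpow_Rpower by lra. apply Rpower_tangent_le; lra.
Qed.

Lemma rpow_convex t u w p : 0 <= t <= 1 -> 0 <= u -> 0 <= w -> 1 <= p ->
  rpow (t * u + (1 - t) * w) p <= t * rpow u p + (1 - t) * rpow w p.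
Proof.
  intros Ht Hu Hw Hp. set (c := t * u + (1 - t) * w).
  destruct (Req_dec c 0) as [E|Hc0].
  { rewrite E, rpow_nonpos by lra. pose proof (rpow_ge0 u p). pose proof (rpow_ge0 w p). nra. }
  assert (Hc : 0 < c) by (unfold c in *; nra).
  rewrite rpow_Rpower by lra.
  pose proof (rpow_tangent_le c u p Hc Hu Hp).
  pose proof (rpow_tangent_le c w p Hc Hw Hp).
  set (D := p * Rpower c (p - 1)) in *.
  assert (Hmean : t * (Rpower c p + D * (u - c)) + (1 - t) * (Rpower c p + D * (w - c))
                  = Rpower c p) by (unfold c; ring).
  assert (t * (Rpower c p + D * (u - c)) <= t * rpow u p) by (apply Rmult_le_compat_l; lra).
  assert ((1 - t) * (Rpower c p + D * (w - c)) <= (1 - t) * rpow w p)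
    by (apply Rmult_le_compat_l; lra).
  lra.
Qed.

(* The convexity step of Minkowski's inequality, with weights [A / (A + B)] and [B / (A + B)]. *)
Lemma rpow_add_le_convex a b A B p : 1 <= p -> 0 <= a -> 0 <= b -> 0 < A -> 0 < B ->
  rpow (a + b) p <=
  rpow (A + B) p * (A / (A + B) * (rpow a p / rpow A p) + B / (A + B) * (rpow b p / rpow B p)).
Proof.
  intros Hp Ha Hb HA HB.
  assert (Ht : 0 <= A / (A + B) <= 1).
  { split; [apply Rlt_le, Rdiv_lt_0_compat; lra|].
    apply Rmult_le_reg_r with (A + B); [lra|]. field_simplify; lra. }
  assert (E : a + b = (A + B) * (A / (A + B) * (a / A) + (1 - A / (A + B)) * (b / B))).
  { field. lra. }
  assert (0 <= a / A) by (apply Rmult_le_pos; [|apply Rlt_le, Rinv_0_lt_compat]; lra).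
  assert (0 <= b / B) by (apply Rmult_le_pos; [|apply Rlt_le, Rinv_0_lt_compat]; lra).
  rewrite E, rpow_mult_distr by nra.
  apply Rmult_le_compat_l; [apply rpow_ge0|].
  eapply Rle_trans; [apply rpow_convex; auto|].
  pose proof (rpow_gt0 A p HA). pose proof (rpow_gt0 B p HB).
  rewrite !rpow_div by lra. right. field. lra.
Qed.

(** * Finite sums *)

Lemma rsum_cons a l f : rsum (a :: l) f = f a + rsum l f.
Proof. reflexivity. Qed.

Lemma rsum_app l1 l2 f : rsum (l1 ++ l2) f = rsum l1 f + rsum l2 f.
Proof. induction l1 as [|a l1 IH]; [simpl; ring|]. rewrite <- app_comm_cons, !rsum_cons, IH. ring. Qed.

Lemma rsum_ext l f h : (forall i, In i l -> f i = h i) -> rsum l f = rsum l h.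
Proof.
  induction l as [|a l IH]; intro H; [reflexivity|].
  rewrite !rsum_cons, H, IH; [reflexivity | intros; apply H | ]; simpl; auto.
Qed.

Lemma rsum_le l f h : (forall i, In i l -> f i <= h i) -> rsum l f <= rsum l h.
Proof.
  induction l as [|a l IH]; intro H; [unfold rsum; simpl; lra|]. rewrite !rsum_cons.
  apply Rplus_le_compat; [apply H; left; reflexivity | apply IH; intros; apply H; right; assumption].
Qed.

Lemma rsum_const0 l : rsum l (fun _ => 0) = 0.
Proof. induction l; unfold rsum in *; simpl; lra. Qed.

Lemma rsum_ge0 l f : (forall i, In i l -> 0 <= f i) -> 0 <= rsum l f.
Proof. intro H. rewrite <- (rsum_const0 l). apply rsum_le, H. Qed.

Lemma rsum_zero l f : (forall i, In i l -> f i = 0) -> rsum l f = 0.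
Proof. intro H. rewrite (rsum_ext l f (fun _ => 0)) by exact H. apply rsum_const0. Qed.

Lemma rsum_plus l f h : rsum l (fun i => f i + h i) = rsum l f + rsum l h.
Proof. induction l as [|a l IH]; [unfold rsum; simpl; ring|]. rewrite !rsum_cons, IH. ring. Qed.

Lemma rsum_minus l f h : rsum l (fun i => f i - h i) = rsum l f - rsum l h.
Proof. induction l as [|a l IH]; [unfold rsum; simpl; ring|]. rewrite !rsum_cons, IH. ring. Qed.

Lemma rsum_scal l a f : rsum l (fun i => a * f i) = a * rsum l f.
Proof. induction l as [|b l IH]; [unfold rsum; simpl; ring|]. rewrite !rsum_cons, IH. ring. Qed.

Lemma rsum_perm l1 l2 f : Permutation l1 l2 -> rsum l1 f = rsum l2 f.
Proof. induction 1; unfold rsum in *; simpl; lra. Qed.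

Lemma rsum_filter_split (P : nat -> bool) l f :
  rsum l f = rsum (filter P l) f + rsum (filter (fun x => negb (P x)) l) f.
Proof.
  induction l as [|a l IH]; [unfold rsum; simpl; ring|].
  cbn [filter]. destruct (P a); cbn [negb]; rewrite !rsum_cons, IH; ring.
Qed.

Lemma rsum_term_le l f i : (forall j, In j l -> 0 <= f j) -> In i l -> f i <= rsum l f.
Proof.
  intros H Hi. rewrite (rsum_filter_split (Nat.eqb i)).
  assert (0 <= rsum (filter (fun x => negb (Nat.eqb i x)) l) f)
    by (apply rsum_ge0; intros j Hj; apply filter_In in Hj; apply H, Hj).
  destruct (in_split _ _ Hi) as (l1 & l2 & ->).
  rewrite filter_app, rsum_app. simpl. rewrite Nat.eqb_refl, rsum_cons.
  assert (0 <= rsum (filter (Nat.eqb i) l1) f)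
    by (apply rsum_ge0; intros j Hj; apply filter_In in Hj; apply H, in_or_app; tauto).
  assert (0 <= rsum (filter (Nat.eqb i) l2) f)
    by (apply rsum_ge0; intros j Hj; apply filter_In in Hj; apply H, in_or_app; simpl; tauto).
  lra.
Qed.

Lemma rsum_length_le l f a : (forall i, In i l -> a <= f i) -> INR (length l) * a <= rsum l f.
Proof.
  induction l as [|b l IH]; intro H; [unfold rsum; simpl; lra|].
  simpl length. rewrite S_INR, rsum_cons.
  pose proof (H b (or_introl eq_refl)). pose proof (IH (fun j Hj => H j (or_intror Hj))). lra.
Qed.

Lemma rsum_sq_le l f : rsum l f ^ 2 <= INR (length l) * rsum l (fun i => f i ^ 2).
Proof.
  induction l as [|a l IH]; [unfold rsum; simpl; lra|].
  destruct l as [|b l']; [unfold rsum; simpl; lra|].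
  set (l := b :: l') in *. change (length (a :: l)) with (S (length l)).
  rewrite S_INR, (rsum_cons a l f), (rsum_cons a l (fun i => f i ^ 2)).
  set (k := INR (length l)) in *.
  set (L := rsum l f) in *. set (Q := rsum l (fun i => f i ^ 2)) in *.
  assert (Hk : 0 < k) by (apply lt_0_INR; simpl; lia).
  (* [2 k f_a L <= k^2 f_a^2 + L^2 <= k^2 f_a^2 + k Q], then divide by [k] *)
  assert (H2 : k * (2 * f a * L) <= k * (k * f a ^ 2 + Q))
    by (pose proof (pow2_ge_0 (k * f a - L)); nra).
  assert (2 * f a * L <= k * f a ^ 2 + Q) by (apply Rmult_le_reg_l with k; lra).
  nra.
Qed.

Lemma rsum_pow4_le l f : rsum l f ^ 4 <= INR (length l) ^ 3 * rsum l (fun i => f i ^ 4).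
Proof.
  set (k := INR (length l)). pose proof (pos_INR (length l)) as Hk. fold k in Hk.
  pose proof (rsum_sq_le l f) as C1. pose proof (rsum_sq_le l (fun i => f i ^ 2)) as C2.
  fold k in C1, C2. simpl in C2.
  rewrite (rsum_ext l (fun i => f i ^ 4) (fun i => f i ^ 2 * (f i ^ 2 * 1))) by (intros; ring).
  assert (rsum l f ^ 4 <= (k * rsum l (fun i => f i ^ 2)) ^ 2).
  { replace (rsum l f ^ 4) with ((rsum l f ^ 2) ^ 2) by ring.
    apply pow_incr. split; [apply pow2_ge_0 | exact C1]. }
  assert (k ^ 2 * rsum l (fun i => f i ^ 2) ^ 2 <= k ^ 2 * (k * rsum l (fun i => f i ^ 2 * (f i ^ 2 * 1))))
    by (apply Rmult_le_compat_l; [apply pow2_ge_0 | exact C2]).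
  nra.
Qed.

(* Each [f k] with [k] in [rest] is at most [V / N], hence [N^3 f_k^4 <= V^3 f_k]. *)
Lemma rsum_pow4_tail_le (T rest : list nat) (f : nat -> R) (N : nat) (V : R) :
  (forall i, 0 <= f i) -> rest = [] \/ length T = N ->
  (forall i k, In i T -> In k rest -> f k <= f i) ->
  rsum T f + rsum rest f <= V ->
  INR N ^ 3 * rsum rest (fun k => f k ^ 4) <= V ^ 4.
Proof.
  intros Hf Hlen Hdom HV.
  assert (HV4 : 0 <= V ^ 4) by (replace (V ^ 4) with ((V ^ 2) ^ 2) by ring; apply pow2_ge_0).
  destruct Hlen as [-> | HTN]; [unfold rsum; simpl; lra|].
  assert (HT0 : 0 <= rsum T f) by (apply rsum_ge0; auto).
  assert (Hr0 : 0 <= rsum rest f) by (apply rsum_ge0; auto).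
  assert (Hk : forall k, In k rest -> INR N * f k <= V).
  { intros k Hk. rewrite <- HTN.
    assert (INR (length T) * f k <= rsum T f) by (apply rsum_length_le; auto). lra. }
  assert (Hpt : forall k, In k rest -> INR N ^ 3 * f k ^ 4 <= V ^ 3 * f k).
  { intros k Hin. pose proof (Hf k). pose proof (pos_INR N).
    assert ((INR N * f k) ^ 3 <= V ^ 3) by (apply pow_incr; split; [nra | auto]).
    replace (INR N ^ 3 * f k ^ 4) with ((INR N * f k) ^ 3 * f k) by ring.
    apply Rmult_le_compat_r; auto. }
  rewrite <- rsum_scal. eapply Rle_trans; [apply rsum_le, Hpt|].
  rewrite rsum_scal. replace (V ^ 4) with (V ^ 3 * V) by ring.
  apply Rmult_le_compat_l; [apply pow_le; lra | lra].
Qed.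

(** * The l_p norm on a list of coordinates *)

Definition lpnorm (p : R) (L : list nat) (a : nat -> R) : R :=
  rpow (rsum L (fun j => rpow (a j) p)) (/ p).

Lemma lpnorm_ge0 p L a : 0 <= lpnorm p L a.
Proof. apply rpow_ge0. Qed.

Lemma rsum_rpow_ge0 p L a : 0 <= rsum L (fun j => rpow (a j) p).
Proof. apply rsum_ge0; intros; apply rpow_ge0. Qed.

Lemma rpow_lpnorm p L a : 0 < p -> rpow (lpnorm p L a) p = rsum L (fun j => rpow (a j) p).
Proof.
  intro Hp. unfold lpnorm. rewrite rpow_mult, Rinv_l by (try apply rsum_rpow_ge0; lra).
  apply rpow_1, rsum_rpow_ge0.
Qed.

Lemma lpnorm_ext p L a b : (forall j, In j L -> a j = b j) -> lpnorm p L a = lpnorm p L b.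
Proof. intro H. unfold lpnorm. f_equal. apply rsum_ext. intros j Hj. rewrite H; auto. Qed.

Lemma lpnorm_le p L a b : 0 < p -> (forall j, In j L -> 0 <= a j <= b j) ->
  lpnorm p L a <= lpnorm p L b.
Proof.
  intros Hp H. apply rpow_le; [apply Rlt_le, Rinv_0_lt_compat; lra|].
  split; [apply rsum_rpow_ge0|]. apply rsum_le. intros j Hj. apply rpow_le; [lra | auto].
Qed.

Lemma lpnorm_eq0 p L a : 0 < p -> (forall j, In j L -> 0 <= a j) -> lpnorm p L a = 0 ->
  forall j, In j L -> a j = 0.
Proof.
  intros Hp Ha H0 j Hj. apply rpow_eq0 in H0; [|apply rsum_rpow_ge0].
  apply (rpow_eq0 _ p); [auto|].
  pose proof (rpow_ge0 (a j) p).
  pose proof (rsum_term_le L (fun j => rpow (a j) p) j (fun k _ => rpow_ge0 (a k) p) Hj).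
  lra.
Qed.

Lemma lpnorm_zero p L a : (forall j, In j L -> a j = 0) -> lpnorm p L a = 0.
Proof.
  intro H. unfold lpnorm. rewrite rsum_zero, rpow_nonpos by (try lra; intros; rewrite H, rpow_nonpos; auto; lra).
  reflexivity.
Qed.

(* Minkowski's inequality: [A^p] and [B^p] normalize the two sums in [rpow_add_le_convex]. *)
Lemma lpnorm_triangle p L a b : 1 <= p ->
  (forall j, In j L -> 0 <= a j) -> (forall j, In j L -> 0 <= b j) ->
  lpnorm p L (fun j => a j + b j) <= lpnorm p L a + lpnorm p L b.
Proof.
  intros Hp Ha Hb. set (A := lpnorm p L a). set (B := lpnorm p L b).
  assert (HA : 0 <= A) by apply lpnorm_ge0. assert (HB : 0 <= B) by apply lpnorm_ge0.
  destruct (Req_dec A 0) as [A0|A0].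
  { pose proof (lpnorm_eq0 p L a ltac:(lra) Ha A0) as Z.
    rewrite (lpnorm_ext p L _ b) by (intros j Hj; rewrite Z by auto; ring). fold B. lra. }
  destruct (Req_dec B 0) as [B0|B0].
  { pose proof (lpnorm_eq0 p L b ltac:(lra) Hb B0) as Z.
    rewrite (lpnorm_ext p L _ a) by (intros j Hj; rewrite Z by auto; ring). fold A. lra. }
  assert (Hsum : rsum L (fun j => rpow (a j + b j) p) <= rpow (A + B) p).
  { eapply Rle_trans.
    { apply rsum_le. intros j Hj. apply (rpow_add_le_convex _ _ A B); auto; lra. }
    rewrite rsum_scal, rsum_plus.
    unfold Rdiv. rewrite (rsum_ext L _ (fun j => A * / (A + B) * / rpow A p * rpow (a j) p)),
      (rsum_ext L (fun j => B * / (A + B) * (rpow (b j) p * / rpow B p))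
                  (fun j => B * / (A + B) * / rpow B p * rpow (b j) p)) by (intros; ring).
    rewrite !rsum_scal, <- !rpow_lpnorm by lra. fold A B.
    pose proof (rpow_gt0 A p ltac:(lra)). pose proof (rpow_gt0 B p ltac:(lra)).
    right. field. lra. }
  unfold lpnorm at 1. eapply Rle_trans.
  { apply rpow_le; [apply Rlt_le, Rinv_0_lt_compat; lra | split; [apply rsum_rpow_ge0 | exact Hsum]]. }
  rewrite rpow_mult, Rinv_r, rpow_1 by lra. lra.
Qed.

(* For [p <= 2], each [a_j <= M := |a|_p] gives [a_j^2 = a_j^p a_j^(2-p) <= a_j^p M^(2-p)]. *)
Lemma rsum_sq_le_lpnorm_sq p L a : 1 <= p <= 2 -> (forall j, In j L -> 0 <= a j) ->
  rsum L (fun j => a j ^ 2) <= lpnorm p L a ^ 2.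
Proof.
  intros Hp Ha. set (M := lpnorm p L a).
  assert (HM : 0 <= M) by apply lpnorm_ge0.
  assert (HMp : rpow M p = rsum L (fun j => rpow (a j) p)) by (apply rpow_lpnorm; lra).
  assert (Hpt : forall j, In j L -> a j ^ 2 <= rpow M (2 - p) * rpow (a j) p).
  { intros j Hj. pose proof (Ha j Hj).
    assert (a j <= M).
    { apply (rpow_le_reg _ _ p); try lra. rewrite HMp.
      apply (rsum_term_le L (fun j => rpow (a j) p)); auto. intros; apply rpow_ge0. }
    rewrite <- rpow_2, Rmult_comm by lra. replace 2 with (p + (2 - p)) at 1 by ring.
    rewrite rpow_plus by lra. apply Rmult_le_compat_l; [apply rpow_ge0|].
    apply rpow_le; lra. }
  eapply Rle_trans; [apply rsum_le, Hpt|].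
  rewrite rsum_scal, <- HMp, <- rpow_plus by lra.
  replace (2 - p + p) with 2 by ring. rewrite rpow_2 by lra. lra.
Qed.

(** * Group norms *)

Lemma gnorm_ge0 p n g x i : 0 <= gnorm p n g x i.
Proof. apply rpow_ge0. Qed.

Lemma gnorm_le_add_sub p n g x y i : 1 <= p ->
  gnorm p n g y i <= gnorm p n g x i + gnorm p n g (vsub x y) i.
Proof.
  intro Hp. change (gnorm p n g ?z i)
    with (lpnorm p (filter (fun j => Nat.eqb (g j) i) (seq 0 n)) (fun j => Rabs (z j))).
  eapply Rle_trans; [|apply lpnorm_triangle; auto; intros; apply Rabs_pos].
  apply lpnorm_le; [lra|]. intros j _. split; [apply Rabs_pos|].
  unfold vsub. replace (y j) with (x j + - (x j - y j)) at 1 by ring.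
  rewrite <- (Rabs_Ropp (x j - y j)). apply Rabs_triang.
Qed.

Lemma gnorm_vsub_null p n g x y i : 0 < p -> gnorm p n g y i = 0 ->
  gnorm p n g (vsub x y) i = gnorm p n g x i.
Proof.
  intros Hp Hy. pose proof (lpnorm_eq0 p _ _ Hp (fun j _ => Rabs_pos (y j)) Hy) as Hy0.
  apply lpnorm_ext. intros j Hj. unfold vsub.
  destruct (Req_dec (y j) 0) as [->|Hyj]; [f_equal; ring|].
  exfalso. exact (Rabs_no_R0 _ Hyj (Hy0 j Hj)).
Qed.

Lemma gnorm_zero p n g x i : (forall j, (j < n)%nat -> x j = 0) -> gnorm p n g x i = 0.
Proof.
  intro Hx. apply lpnorm_zero. intros j Hj.
  apply filter_In in Hj as [Hj _]. apply in_seq in Hj. rewrite Hx by lia. apply Rabs_R0.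
Qed.

Lemma rsum_group_decomp (g : nat -> nat) r l f : (forall j, In j l -> (g j < r)%nat) ->
  rsum l f = rsum (seq 0 r) (fun i => rsum (filter (fun j => Nat.eqb (g j) i) l) f).
Proof.
  induction l as [|a l IH]; intro H.
  - symmetry. apply rsum_zero. reflexivity.
  - assert (Hga : (g a < r)%nat) by (apply H; left; reflexivity).
    rewrite (rsum_ext (seq 0 r) _
      (fun i => (if Nat.eqb (g a) i then f a else 0)
                + rsum (filter (fun j => Nat.eqb (g j) i) l) f))
      by (intros i _; simpl; destruct (Nat.eqb (g a) i); [rewrite rsum_cons|]; ring).
    rewrite rsum_plus, rsum_cons, <- IH by (intros; apply H; right; auto). f_equal.
    replace r with (g a + S (r - g a - 1))%nat by lia.
    rewrite seq_app, rsum_app. cbn [seq]. rewrite rsum_cons, Nat.eqb_refl.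
    rewrite !rsum_zero; [ring | |];
      intros i Hi; apply in_seq in Hi; destruct (Nat.eqb_spec (g a) i); auto; lia.
Qed.

Lemma norm2sq_le_rsum_gnorm_sq p n r g x :
  (forall j, (j < n)%nat -> (g j < r)%nat) -> 1 <= p <= 2 ->
  norm2sq n x <= rsum (seq 0 r) (fun i => gnorm p n g x i ^ 2).
Proof.
  intros Hg Hp. unfold norm2sq.
  rewrite (rsum_group_decomp g r) by (intros j Hj; apply in_seq in Hj; apply Hg; lia).
  apply rsum_le. intros i _.
  rewrite (rsum_ext _ _ (fun j => Rabs (x j) ^ 2)) by (intros; symmetry; apply pow2_abs).
  apply rsum_sq_le_lpnorm_sq; auto. intros; apply Rabs_pos.
Qed.

Lemma gpq_half p n g x L :
  gpq p (1/2) n g x L = rsum L (fun i => sqrt (gnorm p n g x i)) ^ 2.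
Proof.
  unfold gpq. replace (/ (1 / 2)) with 2 by field. replace (1 / 2) with (/ 2) by field.
  rewrite (rsum_ext L _ (fun i => sqrt (gnorm p n g x i)))
    by (intros; apply rpow_sqrt, gnorm_ge0).
  apply rpow_2, rsum_ge0. intros; apply sqrt_pos.
Qed.

Lemma gpq_two p n g x L :
  gpq p 2 n g x L = sqrt (rsum L (fun i => gnorm p n g x i ^ 2)).
Proof.
  unfold gpq. rewrite (rsum_ext L _ (fun i => gnorm p n g x i ^ 2))
    by (intros; apply rpow_2, gnorm_ge0).
  apply rpow_sqrt, rsum_ge0. intros; apply pow2_ge_0.
Qed.

Lemma rpow_gpq_full_half p n r g x :
  rpow (gpq_full p (1/2) n r g x) (1/2) = rsum (seq 0 r) (fun i => sqrt (gnorm p n g x i)).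
Proof.
  unfold gpq_full. rewrite gpq_half. replace (1 / 2) with (/ 2) by field.
  rewrite rpow_sqrt by apply pow2_ge_0. apply sqrt_pow2, rsum_ge0. intros; apply sqrt_pos.
Qed.

Lemma norm2sq_ge0 k y : 0 <= norm2sq k y.
Proof. apply rsum_ge0. intros; apply pow2_ge_0. Qed.

Lemma norm2sq_vsub_diag k y : norm2sq k (vsub y y) = 0.
Proof. apply rsum_zero. intros. unfold vsub. ring. Qed.

Lemma norm2sq_vsub_matvec m n A x y :
  norm2sq m (vsub (matvec n A x) (matvec n A y)) = norm2sq m (matvec n A (vsub x y)).
Proof.
  apply rsum_ext. intros i _. unfold matvec, vsub. rewrite <- rsum_minus.
  f_equal. apply rsum_ext. intros; ring.
Qed.

(** * Support of a vector and the top-N groups *)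

Lemma compl_filter_seq (P : nat -> bool) r :
  compl r (filter P (seq 0 r)) = filter (fun i => negb (P i)) (seq 0 r).
Proof.
  unfold compl. apply filter_ext_in. intros i Hi. f_equal.
  destruct (existsb (Nat.eqb i) (filter P (seq 0 r))) eqn:E.
  - apply existsb_exists in E as (k & Hk & Ek). apply Nat.eqb_eq in Ek. subst k.
    apply filter_In in Hk. symmetry. apply Hk.
  - destruct (P i) eqn:EP; [|reflexivity]. rewrite <- E.
    apply existsb_exists. exists i. rewrite filter_In, Nat.eqb_refl. auto.
Qed.

Lemma rsum_seq_split (P : nat -> bool) r f :
  rsum (seq 0 r) f = rsum (filter P (seq 0 r)) f + rsum (compl r (filter P (seq 0 r))) f.
Proof. rewrite compl_filter_seq. apply rsum_filter_split. Qed.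

(* [num_nonzero_groups p n r g x] is [length (support_groups p n r g x)] by conversion. *)
Definition support_groups (p : R) (n r : nat) (g : nat -> nat) (x : nat -> R) : list nat :=
  filter (fun i => if Req_EM_T (gnorm p n g x i) 0 then false else true) (seq 0 r).

Lemma support_groups_NoDup p n r g x : NoDup (support_groups p n r g x).
Proof. apply NoDup_filter, seq_NoDup. Qed.

Lemma support_groups_lt p n r g x i : In i (support_groups p n r g x) -> (i < r)%nat.
Proof. intro Hi. apply filter_In in Hi as [Hi _]. apply in_seq in Hi. lia. Qed.

Lemma gnorm_compl_support_groups p n r g x i :
  In i (compl r (support_groups p n r g x)) -> gnorm p n g x i = 0.
Proof.
  unfold support_groups. rewrite compl_filter_seq. intro Hi. apply filter_In in Hi as [_ Hi].
  destruct (Req_EM_T (gnorm p n g x i) 0); [assumption | discriminate].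
Qed.

Lemma rsum_support_groups_split p n r g x f :
  rsum (seq 0 r) f = rsum (support_groups p n r g x) f
                     + rsum (compl r (support_groups p n r g x)) f.
Proof. apply rsum_seq_split. Qed.

Fixpoint insert_desc (f : nat -> R) (x : nat) (l : list nat) : list nat :=
  match l with
  | [] => [x]
  | y :: l' => if Rle_dec (f y) (f x) then x :: l else y :: insert_desc f x l'
  end.

Fixpoint sort_desc (f : nat -> R) (l : list nat) : list nat :=
  match l with [] => [] | x :: l' => insert_desc f x (sort_desc f l') end.

Definition ge_by (f : nat -> R) (a b : nat) : Prop := f b <= f a.

Lemma insert_desc_perm f x l : Permutation (x :: l) (insert_desc f x l).
Proof.
  induction l as [|y l IH]; simpl; [reflexivity|].
  destruct (Rle_dec (f y) (f x)); [reflexivity|].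
  eapply perm_trans; [apply perm_swap | constructor; exact IH].
Qed.

Lemma sort_desc_perm f l : Permutation l (sort_desc f l).
Proof.
  induction l as [|x l IH]; simpl; [reflexivity|].
  eapply perm_trans; [constructor; exact IH | apply insert_desc_perm].
Qed.

Lemma insert_desc_sorted f x l :
  StronglySorted (ge_by f) l -> StronglySorted (ge_by f) (insert_desc f x l).
Proof.
  induction l as [|y l IH]; intro H; simpl; [repeat constructor|].
  apply StronglySorted_inv in H as [Hl Hy]. rewrite Forall_forall in Hy.
  destruct (Rle_dec (f y) (f x)) as [Hxy|Hxy]; constructor.
  - constructor; [exact Hl | apply Forall_forall; exact Hy].
  - constructor; [exact Hxy|]. apply Forall_forall. intros z Hz.
    specialize (Hy z Hz). unfold ge_by in *. lra.
  - apply IH, Hl.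
  - apply Forall_forall. intros z Hz.
    apply (Permutation_in _ (Permutation_sym (insert_desc_perm f x l))) in Hz.
    destruct Hz as [<-|Hz]; [unfold ge_by; lra | auto].
Qed.

Lemma sort_desc_sorted f l : StronglySorted (ge_by f) (sort_desc f l).
Proof. induction l; simpl; [constructor | apply insert_desc_sorted; assumption]. Qed.

Lemma StronglySorted_app_rel {A} (Rel : A -> A -> Prop) l1 l2 a b :
  StronglySorted Rel (l1 ++ l2) -> In a l1 -> In b l2 -> Rel a b.
Proof.
  induction l1 as [|c l1 IH]; intros H Ha Hb; [destruct Ha|].
  apply StronglySorted_inv in H as [H Hc]. destruct Ha as [<-|Ha]; [|auto].
  rewrite Forall_forall in Hc. apply Hc, in_or_app. auto.
Qed.

(* [T] is the first [N] entries of [compl r J] sorted by decreasing group norm, and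
   [rest] the remaining ones. *)
Lemma topN_exists p n r g x J N :
  exists T rest, is_topN p n r g x J N T /\ Permutation (compl r J) (T ++ rest) /\
    (forall i k, In i T -> In k rest -> gnorm p n g x k <= gnorm p n g x i) /\
    (rest = [] \/ length T = N).
Proof.
  set (f := gnorm p n g x). set (s := sort_desc f (compl r J)).
  assert (HP : Permutation (compl r J) s) by apply sort_desc_perm.
  assert (HND : NoDup s)
    by (eapply Permutation_NoDup; [exact HP | apply NoDup_filter, seq_NoDup]).
  assert (Hss : StronglySorted (ge_by f) s) by apply sort_desc_sorted.
  rewrite <- (firstn_skipn N s) in HND, Hss, HP.
  exists (firstn N s), (skipn N s).
  assert (Hdom : forall i k, In i (firstn N s) -> In k (skipn N s) -> f k <= f i)
    by (intros i k Hi Hk; exact (StronglySorted_app_rel _ _ _ _ _ Hss Hi Hk)).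
  split; [|split; [exact HP | split; [exact Hdom|]]].
  - split; [|split; [|split]].
    + eapply NoDup_app_remove_r; eauto.
    + intros i Hi. apply (Permutation_in _ (Permutation_sym HP)), in_or_app. auto.
    + rewrite length_firstn, (Permutation_length HP), length_app, length_firstn, length_skipn. lia.
    + intros i k Hi Hk Hnk. apply (Permutation_in _ HP), in_app_or in Hk.
      destruct Hk; [contradiction | auto].
  - rewrite length_firstn. destruct (Nat.le_gt_cases (length s) N).
    + left. apply skipn_all2. assumption.
    + right. lia.
Qed.

(** * The error bound *)

(* For [x = 0] both sides vanish. *)
Lemma is_phi_lower_bound p q m n r g A S N phi x J T :
  is_phi p q m n r g A S N phi -> 0 <= phi ->
  NoDup J -> (forall i, In i J -> (i < r)%nat) -> (length J <= S)%nat ->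
  gpq p q n g x (compl r J) <= gpq p q n g x J -> is_topN p n r g x J N T ->
  phi ^ 2 * rsum (J ++ T) (fun i => gnorm p n g x i ^ 2) <= norm2sq m (matvec n A x).
Proof.
  intros [Hlow _] Hphi HJ HJr HJS Hcone HT.
  set (W := rsum (J ++ T) (fun i => gnorm p n g x i ^ 2)).
  set (E := norm2sq m (matvec n A x)).
  assert (HE : 0 <= E) by apply norm2sq_ge0.
  assert (HW : 0 <= W) by (apply rsum_ge0; intros; apply pow2_ge_0).
  destruct (classic (exists j, (j < n)%nat /\ x j <> 0)) as [Hx|Hx].
  2: { assert (HW0 : W = 0).
       { apply rsum_zero. intros i _. rewrite gnorm_zero; [ring|].
         intros j Hj. apply NNPP. intro Hxj. apply Hx. eauto. }
       rewrite HW0. lra. }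
  assert (Hphi_le : phi <= sqrt E / sqrt W).
  { apply Hlow. exists x, J, T.
    repeat (split; [assumption|]). unfold norm2. rewrite gpq_two. reflexivity. }
  destruct (Req_dec W 0) as [->|HW0]; [lra|].
  assert (HsW : 0 < sqrt W) by (apply sqrt_lt_R0; lra).
  assert (H1 : phi * sqrt W <= sqrt E).
  { apply Rmult_le_reg_r with (/ sqrt W); [apply Rinv_0_lt_compat; lra|].
    rewrite Rmult_assoc, Rinv_r by lra. lra. }
  rewrite <- (sqrt_sqrt W), <- (sqrt_sqrt E) by lra.
  replace (phi ^ 2 * (sqrt W * sqrt W)) with ((phi * sqrt W) * (phi * sqrt W)) by ring.
  apply Rmult_le_compat; nra.
Qed.

(* Test the optimality of [xstar] against [xbar]: off the support [J] of [xbar] the groups of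
   [xstar] are those of [xstar - xbar], and on [J] the triangle inequality applies. *)
Lemma basic_inequality p n r g xbar xstar E lam : 1 <= p -> 0 <= lam ->
  E + lam * rpow (gpq_full p (1/2) n r g xstar) (1/2)
    <= lam * rpow (gpq_full p (1/2) n r g xbar) (1/2) ->
  E + lam * rsum (compl r (support_groups p n r g xbar))
                 (fun i => sqrt (gnorm p n g (vsub xstar xbar) i))
    <= lam * rsum (support_groups p n r g xbar)
                 (fun i => sqrt (gnorm p n g (vsub xstar xbar) i)).
Proof.
  intros Hp Hlam Hopt. set (J := support_groups p n r g xbar).
  set (d := fun i => sqrt (gnorm p n g (vsub xstar xbar) i)).
  rewrite !rpow_gpq_full_half, !(rsum_support_groups_split p n r g xbar) in Hopt.
  fold J in Hopt.
  rewrite (rsum_zero (compl r J) (fun i => sqrt (gnorm p n g xbar i))),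
    (rsum_ext (compl r J) (fun i => sqrt (gnorm p n g xstar i)) d) in Hopt.
  2: { intros i Hi. unfold d. rewrite gnorm_vsub_null by (try lra; exact (gnorm_compl_support_groups _ _ _ _ _ _ Hi)).
       reflexivity. }
  2: { intros i Hi. rewrite (gnorm_compl_support_groups p n r g xbar i Hi). apply sqrt_0. }
  assert (HJ : rsum J (fun i => sqrt (gnorm p n g xbar i))
               <= rsum J (fun i => sqrt (gnorm p n g xstar i)) + rsum J d).
  { rewrite <- rsum_plus. apply rsum_le. intros i _. unfold d.
    eapply Rle_trans; [apply sqrt_le_1_alt, (gnorm_le_add_sub p n g xstar xbar i Hp)|].
    apply sqrt_plus_le; apply gnorm_ge0. }
  apply (Rmult_le_compat_l lam) in HJ; [|exact Hlam]. lra.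
Qed.

Lemma cube_root_bound lam phi s W V :
  0 < lam -> 0 < phi -> 0 < s -> 0 <= W ->
  phi ^ 2 * W <= lam * V -> V ^ 4 <= s ^ 3 * W ->
  W <= Rpower lam (4/3) * s / Rpower phi (8/3).
Proof.
  intros Hlam Hphi Hs HW HE HV.
  set (a := Rpower phi (8/3)). set (b := Rpower lam (4/3)).
  assert (Ha : 0 < a) by apply exp_pos. assert (Hb : 0 < b) by apply exp_pos.
  assert (Ha3 : a ^ 3 = phi ^ 8).
  { unfold a. rewrite Rpower_pow_mult, <- Rpower_pow by lra. f_equal. simpl. field. }
  assert (Hb3 : b ^ 3 = lam ^ 4).
  { unfold b. rewrite Rpower_pow_mult, <- Rpower_pow by lra. f_equal. simpl. field. }
  apply Rmult_le_reg_l with a; [exact Ha|].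
  replace (a * (b * s / a)) with (b * s) by (field; lra).
  destruct (Req_dec W 0) as [->|HW0].
  { rewrite Rmult_0_r. apply Rlt_le, Rmult_lt_0_compat; lra. }
  assert (HpW : 0 < phi ^ 2 * W) by (apply Rmult_lt_0_compat; [apply pow_lt|]; lra).
  assert (HV0 : 0 < V) by nra.
  (* [phi^8 W^4 <= lam^4 V^4 <= lam^4 s^3 W], and then take cube roots *)
  assert (H4 : (phi ^ 2 * W) ^ 4 <= (lam * V) ^ 4) by (apply pow_incr; nra).
  assert (H3 : (a * W) ^ 3 <= (b * s) ^ 3).
  { apply Rmult_le_reg_r with W; [lra|].
    assert (lam ^ 4 * V ^ 4 <= lam ^ 4 * (s ^ 3 * W)) by (apply Rmult_le_compat_l; [nra | lra]).
    replace ((a * W) ^ 3 * W) with (a ^ 3 * W ^ 4) by ring.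
    replace ((b * s) ^ 3 * W) with (b ^ 3 * (s ^ 3 * W)) by ring.
    rewrite Ha3, Hb3. replace (phi ^ 8 * W ^ 4) with ((phi ^ 2 * W) ^ 4) by ring. nra. }
  apply (rpow_le_reg _ _ (INR 3)); [simpl; lra | nra | nra |].
  rewrite !rpow_pow by (nra || lia). exact H3.
Qed.

Lemma error_bound_arith lam phi s EJ ET Erest E V :
  0 < lam -> 0 < phi -> 0 < s -> 0 <= EJ -> 0 <= ET ->
  phi ^ 2 * (EJ + ET) <= E -> E <= lam * V ->
  V ^ 4 <= s ^ 3 * EJ -> s ^ 3 * Erest <= V ^ 4 ->
  EJ + ET + Erest <= 2 * Rpower lam (4/3) * s / Rpower phi (8/3).
Proof.
  intros Hlam Hphi Hs HJ HT HE HEV HV Hrest.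
  assert (Hs3 : 0 < s ^ 3) by (apply pow_lt; lra).
  assert (Hrest_J : Erest <= EJ) by (apply Rmult_le_reg_l with (s ^ 3); lra).
  assert (HK : EJ + ET <= Rpower lam (4/3) * s / Rpower phi (8/3)).
  { apply (cube_root_bound _ _ _ _ V); try lra.
    assert (s ^ 3 * EJ <= s ^ 3 * (EJ + ET)) by (apply Rmult_le_compat_l; lra). lra. }
  unfold Rdiv in *. lra.
Qed.

Lemma cone_error_bound p m n r g A xbar S phi lam h :
  (forall j, (j < n)%nat -> (g j < r)%nat) -> 1 <= p <= 2 -> (1 <= S)%nat ->
  num_nonzero_groups p n r g xbar = S -> is_phi p (1/2) m n r g A S S phi ->
  0 < phi -> 0 < lam ->
  norm2sq m (matvec n A h)
    + lam * rsum (compl r (support_groups p n r g xbar)) (fun i => sqrt (gnorm p n g h i))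
    <= lam * rsum (support_groups p n r g xbar) (fun i => sqrt (gnorm p n g h i)) ->
  norm2sq n h <= 2 * Rpower lam (4/3) * INR S / Rpower phi (8/3).
Proof.
  intros Hg Hp HS HJlen Hphi Hphi0 Hlam Hcone.
  set (J := support_groups p n r g xbar) in *. set (E := norm2sq m (matvec n A h)) in *.
  set (c := fun i => gnorm p n g h i ^ 2). set (d := fun i => sqrt (gnorm p n g h i)) in *.
  assert (HE : 0 <= E) by apply norm2sq_ge0.
  assert (Hd : forall L, 0 <= rsum L d) by (intros; apply rsum_ge0; intros; apply sqrt_pos).
  assert (HUV : rsum (compl r J) d <= rsum J d) by (apply Rmult_le_reg_l with lam; lra).
  assert (HEV : E <= lam * rsum J d)
    by (pose proof (Rmult_le_pos _ _ (Rlt_le _ _ Hlam) (Hd (compl r J))); lra).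
  assert (Hd4 : forall L, rsum L (fun i => d i ^ 4) = rsum L c).
  { intro L. apply rsum_ext. intros i _. unfold c, d. change 4%nat with (2 * 2)%nat.
    rewrite pow_mult, pow2_sqrt by apply gnorm_ge0. reflexivity. }
  destruct (topN_exists p n r g h J S) as (T & rest & HT & Hperm & Hdom & Hrest).
  assert (HTrest : forall f, rsum (compl r J) f = rsum T f + rsum rest f)
    by (intro f; rewrite (rsum_perm _ _ _ Hperm); apply rsum_app).
  assert (Hgrec : phi ^ 2 * (rsum J c + rsum T c) <= E).
  { rewrite <- rsum_app.
    apply (is_phi_lower_bound p (1/2) m n r g A S S); [exact Hphi | lra | apply support_groups_NoDup
      | apply support_groups_lt | rewrite <- HJlen; apply le_n | | exact HT].
    rewrite !gpq_half. apply pow_incr. auto. }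
  assert (Hnorm : norm2sq n h <= rsum J c + rsum T c + rsum rest c).
  { rewrite Rplus_assoc, <- HTrest. unfold J. rewrite <- rsum_support_groups_split.
    apply norm2sq_le_rsum_gnorm_sq; assumption. }
  eapply Rle_trans; [exact Hnorm|].
  apply (error_bound_arith lam phi (INR S) _ _ _ E (rsum J d));
    try (assumption || apply rsum_ge0; intros; apply pow2_ge_0).
  - apply lt_0_INR. lia.
  - rewrite <- Hd4, <- HJlen. apply rsum_pow4_le.
  - rewrite <- Hd4. apply (rsum_pow4_tail_le T); [intros; apply sqrt_pos | assumption | |].
    + intros i k Hi Hk. apply sqrt_le_1_alt, Hdom; assumption.
    + rewrite <- HTrest. exact HUV.
Qed.

Theorem corollary2p2
  (m n r : nat) (g : nat -> nat) (p : R) (A : nat -> nat -> R)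
  (xbar : nat -> R) (S : nat) (phi lambda : R) (xstar : nat -> R) :
  is_group_partition n r g ->
  1 <= p <= 2 ->
  (1 <= S)%nat ->
  num_nonzero_groups p n r g xbar = S ->
  is_phi p (1/2) m n r g A S S phi ->
  0 < phi ->
  0 < lambda ->
  (forall x : nat -> R,
     norm2sq m (vsub (matvec n A xstar) (matvec n A xbar))
       + lambda * rpow (gpq_full p (1/2) n r g xstar) (1/2)
     <= norm2sq m (vsub (matvec n A x) (matvec n A xbar))
       + lambda * rpow (gpq_full p (1/2) n r g x) (1/2)) ->
  norm2sq n (vsub xstar xbar)
    <= 2 * Rpower lambda (4/3) * INR S / Rpower phi (8/3).
Proof.
  intros [Hg _] Hp HS Hnz Hphi Hphi0 Hlam Hopt.
  apply (cone_error_bound p m n r g A xbar); try assumption.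
  rewrite <- norm2sq_vsub_matvec. apply basic_inequality; [lra | lra |].
  pose proof (Hopt xbar) as Hxbar. rewrite norm2sq_vsub_diag, Rplus_0_l in Hxbar.
  exact Hxbar.
Qed.
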